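(* Let $(E,\mathscr{T},\le)$ be a topological preordered space and let $c_1:E\to c_1E$ and $c_2:E\to c_2E$ be two preorder compactifications of $E$ whose compact spaces $c_1E$, $c_2E$ are Hausdorff. If $c_1$ and $c_2$ are equivalent, then there is a preorder homeomorphism $H:c_2E\to c_1E$ such that $H\circ c_2=c_1$.
   Context: A topological preordered space is a triple $(E,\mathscr{T},\le)$ with $(E,\mathscr{T})$ a topological space and $\le$ a reflexive transitive relation on $E$. A map $f$ between preordered sets is isotone if $x\le y\Rightarrow f(x)\le f(y)$. A preorder homeomorphism between topological preordered spaces is a bijection which is continuous and isotone and whose inverse is continuous and isotone; a preorder embedding is a map that is a preorder homeomorphism onto its image endowed with the induced topology and induced preorder. A preorder compactification of $E$ is a preorder embedding $c:E\to cE$ into a compact topological preordered space $(cE,\mathscr{T}_c,\le_c)$ such that $c(E)$ is dense in $cE$. For two preorder compactifications, $c_1\le c_2$ (''$c_2$ dominates $c_1$'') means there is a continuous isotone map $C:c_2E\to c_1E$ with $C\circ c_2=c_1$; $c_1,c_2$ are equivalent if $c_1\le c_2$ and $c_2\le c_1$. *)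

From HB Require Import structures.
From mathcomp Require Import all_boot all_order.
From mathcomp Require Import all_classical all_reals all_analysis.
Set Implicit Arguments. Unset Strict Implicit. Unset Printing Implicit Defensive.
Local Open Scope classical_set_scope.

Definition is_preorder (T : Type) (le : T -> T -> Prop) : Prop :=
  (forall x, le x x) /\ (forall x y z, le x y -> le y z -> le x z).

Definition isotone (S T : Type) (leS : S -> S -> Prop) (leT : T -> T -> Prop)
  (f : S -> T) : Prop := forall x y, leS x y -> leT (f x) (f y).

Definition preorder_homeomorphism (S T : topologicalType)
  (leS : S -> S -> Prop) (leT : T -> T -> Prop) (f : S -> T) : Prop :=
  exists g : T -> S,
    cancel f g /\ cancel g f /\
    continuous f /\ isotone leS leT f /\
    continuous g /\ isotone leT leS g.

(* Preorder embedding: a preorder homeomorphism onto its image, the image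
   carrying the induced topology and induced preorder.  Spelled out: f is
   injective, continuous, isotone; the inverse on the image is isotone
   (le (f x) (f y) -> le x y); and the inverse is continuous for the induced
   topology, i.e. f maps open sets of S to relatively open subsets of f(S). *)
Definition preorder_embedding (S T : topologicalType)
  (leS : S -> S -> Prop) (leT : T -> T -> Prop) (f : S -> T) : Prop :=
  injective f /\ continuous f /\ isotone leS leT f /\
  (forall x y, leT (f x) (f y) -> leS x y) /\
  (forall U : set S, open U -> exists V : set T, open V /\ f @` U = range f `&` V).

Definition preorder_compactification (E cE : topologicalType)
  (leE : E -> E -> Prop) (lec : cE -> cE -> Prop) (c : E -> cE) : Prop :=
  is_preorder lec /\ compact [set: cE] /\
  preorder_embedding leE lec c /\ closure (range c) = [set: cE].

Definition compactification_le (E c1E c2E : topologicalType)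
  (le1 : c1E -> c1E -> Prop) (le2 : c2E -> c2E -> Prop)
  (c1 : E -> c1E) (c2 : E -> c2E) : Prop :=
  exists C : c2E -> c1E, continuous C /\ isotone le2 le1 C /\ C \o c2 = c1.

From HB Require Import structures.
From mathcomp Require Import all_boot all_order.
From mathcomp Require Import all_classical all_reals all_analysis.
Local Open Scope classical_set_scope.

(* Continuous maps into a Hausdorff space that agree on a dense set agree
   everywhere.  Hence the two dominating maps C : c2E -> c1E and
   D : c1E -> c2E compose, on each side, to a continuous map fixing the dense
   image of E, i.e. to the identity; so C is a continuous isotone bijection
   with continuous isotone inverse D. *)

Lemma continuous_eq_on_dense (X Y : topologicalType) (A : set X) (f g : X -> Y) :
  hausdorff_space Y -> closure A = [set: X] ->
  continuous f -> continuous g -> (forall a, A a -> f a = g a) -> f = g.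
Proof.
move=> hY denseA cf cg fg; apply/funext => x.
apply: hY => U V Ufx Vgx.
have Ax : closure A x by rewrite denseA.
have nbhsUV : nbhs x (f @^-1` U `&` g @^-1` V).
  by apply: filterI; [exact: cf | exact: cg].
have [a [Aa [Ufa Vga]]] := Ax _ nbhsUV.
by exists (f a); split; rewrite // fg.
Qed.

Lemma dense_range_cancel (E X Y : topologicalType) (c : E -> X) (c' : E -> Y)
    (f : X -> Y) (g : Y -> X) :
  hausdorff_space X -> closure (range c) = [set: X] ->
  continuous f -> continuous g -> f \o c = c' -> g \o c' = c -> cancel f g.
Proof.
move=> hX denseX cf cg fc gc x.
suff /(congr1 (@^~ x)) : g \o f = id by [].
apply: continuous_eq_on_dense hX denseX _ _ _ => //.
- by move=> y; apply: continuous_comp; [exact: cf | exact: cg].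
- by move=> y; exact: cvg_id.
- by move=> _ [e _ <-]; rewrite -[RHS](congr1 (@^~ e) gc) -fc.
Qed.

Theorem mainTheorem1 (E c1E c2E : topologicalType)
  (leE : E -> E -> Prop) (le1 : c1E -> c1E -> Prop) (le2 : c2E -> c2E -> Prop)
  (c1 : E -> c1E) (c2 : E -> c2E) :
  is_preorder leE ->
  preorder_compactification leE le1 c1 ->
  preorder_compactification leE le2 c2 ->
  hausdorff_space c1E -> hausdorff_space c2E ->
  compactification_le le1 le2 c1 c2 ->
  compactification_le le2 le1 c2 c1 ->
  exists H : c2E -> c1E, preorder_homeomorphism le2 le1 H /\ H \o c2 = c1.
Proof.
move=> _ [_ [_ [_ dense1]]] [_ [_ [_ dense2]]] h1 h2
  [C [cC [isoC Cc2]]] [D [cD [isoD Dc1]]].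
exists C; split => //; exists D.
have CK : cancel C D by exact: dense_range_cancel h2 dense2 cC cD Cc2 Dc1.
have DK : cancel D C by exact: dense_range_cancel h1 dense1 cD cC Dc1 Cc2.
by repeat split.
Qed.
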